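(* Let $d\ge4$ be an integer and $\Gamma=\mathbb{Z}_2^d$. Then $\Gamma$ is not $(D(\Gamma)-1)$-close.
   Context: For a finite abelian group $\Gamma$, its Davenport constant $D(\Gamma)$ is the minimum integer $\ell$ such that every sequence of $\ell$ elements of $\Gamma$ has a nonempty subsequence summing to $0$. For an integer $k\ge1$, a finite abelian group $\Gamma$ is $k$-close if for every matroid $M$, every labeling $\psi\colon E(M)\to\Gamma$, every $g\in\Gamma$ and every basis $B$ of $M$, if $M$ has a basis with label $g$ then it has a basis $B^*$ with $\psi(B^* )=g$ and $|B\setminus B^*|\le k$, where $\psi(S):=\sum_{x\in S}\psi(x)$. *)

From HB Require Import structures.
From mathcomp Require Import all_boot all_order all_algebra.
Set Implicit Arguments. Unset Strict Implicit. Unset Printing Implicit Defensive.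
Import GRing.Theory.
Local Open Scope ring_scope.

Definition is_matroid_bases (E : finType) (Bs : {set {set E}}) : Prop :=
  Bs != set0 /\
  forall B1 B2, B1 \in Bs -> B2 \in Bs ->
    forall x, x \in B1 :\: B2 ->
      exists2 y, y \in B2 :\: B1 & (y |: (B1 :\ x)) \in Bs.

Definition label_sum (E : finType) (G : zmodType) (psi : E -> G) (S : {set E}) : G :=
  \sum_(x in S) psi x.

Definition has_zero_sum_subseq (G : zmodType) (l : nat) (s : 'I_l -> G) : Prop :=
  exists I : {set 'I_l}, I != set0 /\ \sum_(i in I) s i = 0.

Definition is_davenport_constant (G : zmodType) (D : nat) : Prop :=
  (forall s : 'I_D -> G, has_zero_sum_subseq s) /\
  (forall l, (forall s : 'I_l -> G, has_zero_sum_subseq s) -> (D <= l)%N).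

Definition k_close (G : zmodType) (k : nat) : Prop :=
  forall (E : finType) (Bs : {set {set E}}), is_matroid_bases Bs ->
  forall (psi : E -> G) (g : G) (B : {set E}), B \in Bs ->
    (exists2 B', B' \in Bs & label_sum psi B' = g) ->
    exists2 Bstar, Bstar \in Bs &
      label_sum psi Bstar = g /\ (#|B :\: Bstar| <= k)%N.

From mathcomp Require Import all_boot all_order all_algebra zify.
Set Implicit Arguments. Unset Strict Implicit. Unset Printing Implicit Defensive.
Import GRing.Theory.
Local Open Scope ring_scope.

(* Label the elements of a ground set injectively and fix an r-set B*.  The
   r-subsets whose label sum differs from that of B*, together with B* itself,
   are the bases of a matroid (an exchange fails for at most one candidate,
   since injective labels give distinct sums to the candidates).  In it B* is
   the only basis with its label, so any basis disjoint from B* is at distance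
   r from it: no group admitting such a configuration is (r-1)-close.  In
   Z_2^d the Davenport constant is at most d+1 (2^(d+1) subset sums must
   collide) and 2(d+1)+1 <= 2^d for d >= 4, which leaves room for two disjoint
   (d+1)-sets with distinct sums. *)

Lemma label_sumU1 (E : finType) (G : zmodType) (psi : E -> G) (y : E) (S : {set E}) :
  y \notin S -> label_sum psi (y |: S) = psi y + label_sum psi S.
Proof. by move=> yS; rewrite /label_sum big_setU1. Qed.

Lemma cardsU1D1 (T : finType) (A : {set T}) (x y : T) :
  x \in A -> y \notin A -> #|y |: (A :\ x)| = #|A|.
Proof.
move=> xA yA; rewrite cardsU1 (cardsD1 x A) xA !inE negb_and yA orbT.
by rewrite add1n.
Qed.

Lemma setU1D1_eq (T : finType) (B1 B2 : {set T}) (x y : T) :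
  #|B1| = #|B2| -> x \in B1 :\: B2 -> B2 :\: B1 \subset [set y] ->
  y |: (B1 :\ x) = B2.
Proof.
move=> cB; rewrite inE => /andP[xB2 xB1] /subsetP sub21.
apply/esym/eqP; rewrite eqEcard; apply/andP; split.
  apply/subsetP => z zB2; have [zB1|zB1] := boolP (z \in B1).
    have zx : z != x by apply: contraNneq xB2 => <-.
    by rewrite !inE zB1 zx orbT.
  by rewrite (set1P (sub21 z _)) ?setU11 // inE zB1.
rewrite -cB cardsU1 (cardsD1 x B1) xB1 add1n.
by case: (y \notin _).
Qed.

Section PuncturedUniformMatroid.
Variables (E : finType) (G : zmodType) (psi : E -> G) (r : nat) (Bst : {set E}).
Hypotheses (psi_inj : injective psi) (card_Bst : #|Bst| = r).

Definition punctured_uniform_bases : {set {set E}} :=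
  [set C : {set E} | (#|C| == r) &&
     ((label_sum psi C != label_sum psi Bst) || (C == Bst))].

Local Notation Bs := punctured_uniform_bases.

Lemma Bst_basis : Bst \in Bs.
Proof. by rewrite inE card_Bst !eqxx orbT. Qed.

Lemma punctured_uniform_matroid : is_matroid_bases Bs.
Proof.
split; first by apply/set0Pn; exists Bst; exact: Bst_basis.
move=> B1 B2; rewrite !inE => /andP[/eqP c1 _] B2P x xD.
have c2 : #|B2| = r by case/andP: B2P => /eqP.
have xB1 : x \in B1 by case/setDP: xD.
have [y yD] : exists y, y \in B2 :\: B1.
  apply/card_gt0P; rewrite cardsD c2 -c1 setIC -cardsD; apply/card_gt0P.
  by exists x.
have card_swap z : z \in B2 :\: B1 -> #|z |: (B1 :\ x)| == r.
  by case/setDP=> _ zB1; rewrite cardsU1D1 ?c1.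
rewrite -/Bs; have [yBs|yBs] := boolP (y |: (B1 :\ x) \in Bs); first by exists y.
have /existsP[z /andP[zD zy]] : [exists z, (z \in B2 :\: B1) && (z != y)].
  apply: contraNT yBs; rewrite negb_exists => /forallP noz.
  rewrite (@setU1D1_eq _ B1 B2) ?c1 ?c2 //; last first.
    by apply/subsetP => z zD; move: (noz z); rewrite zD negbK inE.
  by rewrite inE.
exists z => //; rewrite inE card_swap //=; apply/orP; left.
have notin w : w \in B2 :\: B1 -> w \notin B1 :\ x.
  by case/setDP=> _ wB1; rewrite inE negb_and wB1 orbT.
have /eqP <- : label_sum psi (y |: (B1 :\ x)) == label_sum psi Bst.
  by move: yBs; rewrite inE card_swap //= negb_or negbK => /andP[].
by rewrite !label_sumU1 ?notin // (can_eq (addrK _)) (inj_eq psi_inj).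
Qed.

Lemma not_k_close_of_disjoint_bases (B : {set E}) :
  (0 < r)%N -> #|B| = r -> [disjoint B & Bst] ->
  label_sum psi B != label_sum psi Bst -> ~ k_close G r.-1.
Proof.
move=> r_gt0 cB disB neB close.
have BBs : B \in Bs by rewrite inE cB eqxx neB.
have [C] := close E Bs punctured_uniform_matroid psi _ B BBs
  (ex_intro2 _ _ Bst Bst_basis erefl).
rewrite inE => /andP[_ CP] [labC]; move: CP; rewrite labC eqxx /= => /eqP ->.
by rewrite (setDidPl disB) cB; case: (r) r_gt0 => [|n] // _; rewrite ltnn.
Qed.

End PuncturedUniformMatroid.

Lemma not_k_close_of_card (G : finZmodType) (r : nat) :
  (0 < r)%N -> (2 * r < #|G|)%N -> ~ k_close G r.-1.
Proof.
move=> r_gt0 cardG.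
pose E := (('I_r + 'I_r) + unit)%type.
have cardE : (#|{: E}| <= #|G|)%N.
  by rewrite !card_sum !card_ord card_unit; lia.
pose psi (e : E) : G := enum_val (widen_ord cardE (enum_rank e)).
have psi_inj : injective psi.
  by move=> e e' /enum_val_inj /(congr1 val) /= /val_inj /enum_rank_inj.
pose B0 : {set E} := [set inl (inl i) | i : 'I_r].
pose B1 : {set E} := [set inl (inr i) | i : 'I_r].
have cB0 : #|B0| = r by rewrite card_imset ?card_ord // => i j [].
have cB1 : #|B1| = r by rewrite card_imset ?card_ord // => i j [].
have dis01 : [disjoint B0 & B1].
  by rewrite -setI_eq0; apply/eqP/setP => e; rewrite !inE;
     apply/andP => -[/imsetP[i _ ->] /imsetP[j _]].
have [ne01|/negPn/eqP eq01] := boolP (label_sum psi B0 != label_sum psi B1).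
  exact: (not_k_close_of_disjoint_bases psi_inj cB1 r_gt0 cB0 dis01 ne01).
pose a : E := inl (inl (Ordinal r_gt0)); pose w : E := inr tt.
have aB0 : a \in B0 by apply/imsetP; exists (Ordinal r_gt0).
have aB0a : a \notin B0 :\ a by rewrite !inE eqxx.
have wB0 : w \notin B0 by apply/imsetP => -[].
have wB0a : w \notin B0 :\ a by rewrite inE negb_and wB0 orbT.
have cB : #|w |: (B0 :\ a)| = r by rewrite cardsU1D1.
apply: (not_k_close_of_disjoint_bases psi_inj cB1 r_gt0 cB).
  rewrite -setI_eq0 setIUl setU_eq0 !setI_eq0 disjoints1.
  rewrite (disjointWl (subD1set _ _) dis01) andbT.
  by apply/imsetP => -[].
rewrite -eq01 -{2}(setD1K aB0) !label_sumU1 // (can_eq (addrK _)).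
by rewrite (inj_eq psi_inj).
Qed.

Lemma k_close_mono (G : zmodType) (k k' : nat) :
  (k <= k')%N -> k_close G k -> k_close G k'.
Proof.
move=> le_kk' close E Bs M psi g B BBs ex.
have [C CBs [labC cardC]] := close E Bs M psi g B BBs ex.
by exists C => //; split => //; apply: leq_trans le_kk'.
Qed.

(* Two subsets with equal sums give a zero-sum symmetric difference. *)
Lemma has_zero_sum_subseq_of_card (G : finZmodType) (l : nat) (s : 'I_l -> G) :
  (forall x : G, x + x = 0) -> (#|G| < 2 ^ l)%N -> has_zero_sum_subseq s.
Proof.
move=> addxx cardG.
pose F (I : {set 'I_l}) : G := \sum_(i in I) s i.
have /injectivePn[I [J neIJ eqF]] : ~~ injectiveb F.
  apply: contraTN cardG => /injectiveP/leq_card; rewrite -leqNgt.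
  by rewrite -cardsT -powersetT card_powerset cardsT card_ord.
exists ((I :\: J) :|: (J :\: I)); split.
  by apply: contra neIJ; rewrite setU_eq0 !setD_eq0 -eqEsubset.
rewrite (eq_bigl [predU I :\: J & J :\: I]) => [|i]; last by rewrite !inE.
rewrite bigU /=; last by apply/pred0P => i /=; rewrite !inE; do 2 case: (i \in _).
have -> : \sum_(i in I :\: J) s i = \sum_(i in J :\: I) s i.
  by move: eqF; rewrite /F (@big_setID _ _ _ _ I J) (@big_setID _ _ _ _ J I) setIC; apply: addrI.
exact: addxx.
Qed.

Lemma addrr_Z2 (m n : nat) (A : 'M['Z_2]_(m, n)) : A + A = 0.
Proof.
apply/matrixP => i j; rewrite !mxE.
by case: (A i j) => [[|[|[]]] ?] //; apply/val_inj.
Qed.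

Lemma card_Z2_rV (d : nat) : #|{: 'rV['Z_2]_d}| = (2 ^ d)%N.
Proof. by rewrite card_mx card_ord mul1n. Qed.

Lemma doubled_succ_lt_exp2 (d : nat) : (4 <= d)%N -> (2 * d.+1 < 2 ^ d)%N.
Proof.
elim: d => // d IH; rewrite leq_eqVlt => /orP[/eqP <- //|/IH].
by rewrite expnS; lia.
Qed.

Theorem theorem6p13 (d : nat) (hd : (4 <= d)%N) (D : nat) :
  is_davenport_constant 'rV['Z_2]_d D -> ~ k_close 'rV['Z_2]_d (D - 1).
Proof.
move=> [_ D_min] close.
have D_le : (D <= d.+1)%N.
  apply: D_min => s; apply: has_zero_sum_subseq_of_card; first exact: addrr_Z2.
  by rewrite card_Z2_rV ltn_exp2l.
have close_d : k_close 'rV['Z_2]_d d.+1.-1 by apply: k_close_mono close; lia.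
apply: not_k_close_of_card close_d => //.
by rewrite card_Z2_rV; exact: doubled_succ_lt_exp2.
Qed.
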